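(* Let $\phi:K\to L$ be a continuous surjection between compact Hausdorff spaces, and assume $\phi$ admits a regular averaging operator, i.e., a bounded linear operator $P:C(K)\to C(L)$ with $P(f\circ\phi)=f$ for all $f\in C(L)$ and $\|P\|\le1$. If $K$ has the extension property (resp. the regular extension property), then $L$ has the extension property (resp. the regular extension property).
   Context: $C(K)$ is the Banach space of real-valued continuous functions on $K$ with the supremum norm and $\mathbf 1_K$ its unit. For a closed $F\subseteq K$, an extension operator for $F$ in $K$ is a bounded linear map $E:C(F)\to C(K)$ with $E(f)|_F=f$ for all $f\in C(F)$; it is regular if $\|E\|\le1$ and $E(\mathbf 1_F)=\mathbf 1_K$. $K$ has the (regular) extension property if every nonempty closed subset of $K$ admits a (regular) extension operator in $K$. *)

From HB Require Import structures.
From mathcomp Require Import all_boot all_order all_algebra.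
From mathcomp Require Import all_classical all_reals all_analysis.
Set Implicit Arguments. Unset Strict Implicit. Unset Printing Implicit Defensive.
Import Order.TTheory GRing.Theory Num.Theory.
Import numFieldNormedType.Exports.
Local Open Scope classical_set_scope.
Local Open Scope ring_scope.

(* C(X) is represented by the continuous functions X -> R; a bounded linear
   operator C(X) -> C(Y) is a map (X -> R) -> (Y -> R) sending continuous
   functions to continuous functions, linear and bounded on C(X) (its values
   on non-continuous functions are irrelevant). *)

Definition sup_norm (R : realType) (X : Type) (f : X -> R) : R :=
  sup [set `|f x| | x in [set: X]].

Definition bounded_linear_op (R : realType) (X Y : topologicalType)
    (T : (X -> R) -> (Y -> R)) : Prop :=
  [/\ (forall f, continuous f -> continuous (T f)),
      (forall (a : R) (f g : X -> R), continuous f -> continuous g ->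
          T (fun x => a * f x + g x) = (fun y => a * T f y + T g y)) &
      exists M : R, forall f, continuous f -> sup_norm (T f) <= M * sup_norm f].

Definition extension_operator (R : realType) (K : topologicalType) (F : set K)
    (E : (set_type F -> R) -> (K -> R)) : Prop :=
  bounded_linear_op E /\
  (forall f : set_type F -> R, continuous f ->
     forall x : set_type F, E f (set_val x) = f x).

Definition regular_extension_operator (R : realType) (K : topologicalType)
    (F : set K) (E : (set_type F -> R) -> (K -> R)) : Prop :=
  [/\ extension_operator E,
      (forall f : set_type F -> R, continuous f -> sup_norm (E f) <= sup_norm f) &
      E (fun _ => 1) = (fun _ => 1)].

Definition extension_property (R : realType) (K : topologicalType) : Prop :=
  forall F : set K, closed F -> F !=set0 ->
    exists E : (set_type F -> R) -> (K -> R), extension_operator E.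

Definition regular_extension_property (R : realType) (K : topologicalType) : Prop :=
  forall F : set K, closed F -> F !=set0 ->
    exists E : (set_type F -> R) -> (K -> R), regular_extension_operator E.

Definition regular_averaging_operator (R : realType) (K L : topologicalType)
    (phi : K -> L) (P : (K -> R) -> (L -> R)) : Prop :=
  [/\ bounded_linear_op P,
      (forall f : L -> R, continuous f -> P (f \o phi) = f) &
      (forall g : K -> R, continuous g -> sup_norm (P g) <= sup_norm g)].

From HB Require Import structures.
From mathcomp Require Import all_boot all_order all_algebra.
From mathcomp Require Import all_classical all_reals all_analysis.
From mathcomp Require Import lra.
Import Order.TTheory GRing.Theory Num.Theory.
Import numFieldNormedType.Exports.
Local Open Scope classical_set_scope.
Local Open Scope ring_scope.
Set Implicit Arguments. Unset Strict Implicit.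

(* Let F be closed in L and E' an extension operator for phi^-1(F) in K.
   Then E f := P (E' (f \o phi)) extends f: a regular averaging operator is
   positive (it is unital of norm at most 1), and a positive operator fixing
   the functions constant along phi is local on fibres: if G is constant c on
   phi^-1(y) then P G y = c, by squeezing G between c +- (e + B v \o phi) for
   an Urysohn function v of L vanishing at y.  Norms and unitality of E' pass
   to E since P is a contraction fixing constants. *)

Section SupNorm.
Context {R : realType}.

Lemma compact_bounded_fun (X : topologicalType) (g : X -> R) :
  compact [set: X] -> continuous g -> exists2 M, 0 < M & forall x, `|g x| <= M.
Proof.
move=> cX cg.
have /compact_bounded [M [Mr HM]] : compact (g @` [set: X]).
  by apply: continuous_compact => //; exact: continuous_subspaceT.
exists (`|M| + 1) => [|x]; first by rewrite ltr_pwDr.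
apply: (HM (`|M| + 1)); last by exists x.
by apply: (le_lt_trans (real_ler_norm Mr)); rewrite ltrDl.
Qed.

Lemma ler_norm_sup_norm (X : topologicalType) (g : X -> R) :
  compact [set: X] -> continuous g -> forall x, `|g x| <= sup_norm g.
Proof.
move=> cX cg x; have [M _ HM] := compact_bounded_fun cX cg.
apply: ub_le_sup; last by exists x.
by exists M => _ [y _ <-].
Qed.

Lemma sup_norm_le (X : Type) (g : X -> R) (c : R) :
  0 <= c -> (forall x, `|g x| <= c) -> sup_norm g <= c.
Proof.
move=> c0 gc; have [[x0 _]|X0] := pselect (exists x : X, True).
  by apply: ge_sup; [exists `|g x0|, x0 | move=> _ [y _ <-]].
rewrite /sup_norm (_ : [set `|g x| | x in [set: X]] = set0) ?sup0 //.
by apply/seteqP; split=> // r [x _ _]; case: X0; exists x.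
Qed.

Lemma sup_norm_comp_surj (X Y : Type) (f : Y -> R) (q : X -> Y) :
  (forall y, exists x, q x = y) -> sup_norm (f \o q) = sup_norm f.
Proof.
move=> qsurj; rewrite /sup_norm; congr sup; apply/seteqP; split.
  by move=> _ [x _ <-]; exists (q x).
by move=> _ [y _ <-]; have [x <-] := qsurj y; exists x.
Qed.

Lemma continuous_scaleD (X : topologicalType) (a : R) (f g : X -> R) :
  continuous f -> continuous g -> continuous (fun x => a * f x + g x).
Proof.
move=> cf cg x; apply: continuousD (cg x).
exact: continuousM (@cst_continuous _ _ a x) (cf x).
Qed.

End SupNorm.

Section UnitalContraction.
Context {R : realType} {K L : topologicalType} (T : (K -> R) -> (L -> R)).
Hypothesis cK : compact [set: K].
Hypothesis cL : compact [set: L].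
Hypothesis T_cont : forall f, continuous f -> continuous (T f).
Hypothesis T_lin : forall (a : R) (f g : K -> R), continuous f -> continuous g ->
  T (fun x => a * f x + g x) = (fun y => a * T f y + T g y).
Hypothesis T_cst : forall c : R, T (fun _ => c) = (fun _ => c).
Hypothesis T_contr : forall g, continuous g -> sup_norm (T g) <= sup_norm g.

Lemma unital_contraction_ge0 (g : K -> R) : continuous g ->
  (forall x, 0 <= g x) -> forall y, 0 <= T g y.
Proof.
move=> cg g0 y; have [s s0 gs] := compact_bounded_fun cK cg.
(* [2 g / s - 1] takes values in [-1, 1], hence so does its image. *)
pose h x := (2 / s) * g x + (fun _ => -1) x.
have ch : continuous h by apply: continuous_scaleD => //; exact: cst_continuous.
have Th : T h = fun y => (2 / s) * T g y + -1.
  by rewrite /h T_lin ?T_cst //; exact: cst_continuous.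
have h_le1 : sup_norm (T h) <= 1.
  apply: (le_trans (T_contr ch)); apply: sup_norm_le => // x.
  have gxs : g x / s <= 1 by rewrite ler_pdivrMr // mul1r -(ger0_norm (g0 x)); exact: gs.
  have gxs0 : 0 <= g x / s by rewrite divr_ge0 // ltW.
  have -> : h x = 2 * (g x / s) - 1 by rewrite /h mulrA mulrAC.
  by rewrite ler_norml; apply/andP; split; lra.
have := le_trans (ler_norm_sup_norm cL (T_cont ch) y) h_le1.
rewrite Th ler_norml => /andP [+ _].
by rewrite lerDr pmulr_rge0 // divr_gt0.
Qed.

Lemma unital_contraction_le (g u : K -> R) : continuous g -> continuous u ->
  (forall x, g x <= u x) -> forall y, T g y <= T u y.
Proof.
move=> cg cu gu y.
have := unital_contraction_ge0 (continuous_scaleD (a := -1) cg cu) _ y.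
rewrite T_lin // mulN1r addrC subr_ge0; apply => x.
by rewrite mulN1r addrC subr_ge0.
Qed.

End UnitalContraction.

Section RegularAveraging.
Context {R : realType} {K L : topologicalType} (phi : K -> L)
  (P : (K -> R) -> (L -> R)).
Hypothesis cK : compact [set: K].
Hypothesis cL : compact [set: L].
Hypothesis hL : hausdorff_space L.
Hypothesis cphi : continuous phi.
Hypothesis HP : regular_averaging_operator phi P.

Let P_cont : forall f, continuous f -> continuous (P f).
Proof. by case: HP => -[]. Qed.

Let P_lin : forall (a : R) (f g : K -> R), continuous f -> continuous g ->
  P (fun x => a * f x + g x) = (fun y => a * P f y + P g y).
Proof. by case: HP => -[]. Qed.

Let P_phi : forall f : L -> R, continuous f -> P (f \o phi) = f.
Proof. by case: HP. Qed.

Let P_contr : forall g, continuous g -> sup_norm (P g) <= sup_norm g.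
Proof. by case: HP. Qed.

Lemma averaging_cst (c : R) : P (fun _ => c) = (fun _ => c).
Proof. exact: (P_phi (@cst_continuous _ _ c)). Qed.

Let P_le := unital_contraction_le cK cL P_cont P_lin averaging_cst P_contr.

Lemma averaging_fiber_cst (G : K -> R) (c : R) (y : L) : continuous G ->
  (forall x, phi x = y -> G x = c) -> P G y = c.
Proof.
move=> cG Gc.
have cGc : continuous (fun x => 1 * G x + - c).
  exact: continuous_scaleD cG (@cst_continuous _ _ (- c)).
have [B B0 GB] := compact_bounded_fun cK cGc.
suff Pe : forall e, 0 < e -> `|P G y - c| <= e.
  apply/eqP; rewrite -subr_eq0 -normr_le0; apply/ler_addgt0Pr => e e0.
  by rewrite add0r; exact: Pe.
move=> e e0; pose C := [set x | e <= `|1 * G x + - c|].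
have clC : closed C.
  apply: (@preimage_closed _ _ (fun x => `|1 * G x + - c|) [set r | e <= r]).
    by move=> x _; apply: continuous_comp (cGc x) _; exact: norm_continuous.
  exact: closed_ge.
have clphiC : closed (phi @` C).
  apply: (compact_closed hL); apply: continuous_compact.
    exact: continuous_subspaceT.
  exact: subclosed_compact clC cK _.
have nphiCy : ~ (phi @` C) y.
  move=> [x + pxy]; rewrite /C /= Gc // mul1r subrr normr0.
  by apply/negP; rewrite -ltNge.
have /(@uniform_separatorP L R) [v [cv v01 v0 v1]] :=
  @normal_completely_regular R L (compact_normal hL cL)
    (hausdorff_accessible hL) y _ clphiC nphiCy.
have vy : v y = 0 by apply: v0; exists y.
have v_ge0 z : 0 <= v z.
  have : `[0, 1]%classic (v z) by apply: v01; exists z.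
  by rewrite /= in_itv /= => /andP [].
have Gv x : `|G x - c| <= e + B * v (phi x).
  have [Cx|nCx] := pselect (C x).
    have -> : v (phi x) = 1 by apply: v1; exists (phi x) => //; exists x.
    by have := GB x; rewrite mul1r mulr1; lra.
  have := mulr_ge0 (ltW B0) (v_ge0 (phi x)).
  by move: nCx; rewrite /C /= mul1r => /negP; rewrite -ltNge => ?; lra.
have cvphi : continuous (v \o phi) by move=> x; apply: continuous_comp; [exact: cphi | exact: cv].
have P_squeeze (b d : R) :
    P (fun x => b * (v \o phi) x + d) = fun z => b * v z + d.
  exact: (P_phi (continuous_scaleD (a := b) cv (@cst_continuous _ _ d))).
have up : P G y <= c + e.
  have := P_le cG (continuous_scaleD (a := B) cvphi (@cst_continuous _ _ (c + e))) _ y.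
  rewrite P_squeeze vy mulr0 add0r; apply => x /=.
  by have := Gv x; rewrite ler_norml => /andP [_]; lra.
have low : c - e <= P G y.
  have := P_le (continuous_scaleD (a := - B) cvphi (@cst_continuous _ _ (c - e))) cG _ y.
  rewrite P_squeeze vy mulr0 add0r; apply => x /=.
  by have := Gv x; rewrite ler_norml => /andP [+ _]; lra.
by rewrite ler_norml; lra.
Qed.

Hypothesis phi_surj : forall y : L, exists x : K, phi x = y.
Variable F : set L.

Definition preimage_restriction (x : set_type (phi @^-1` F)) : set_type F :=
  exist (fun z => z \in F) (phi (sval x)) (mem_set (set_valP x)).

Local Notation q := preimage_restriction.

Lemma preimage_restriction_continuous : continuous q.
Proof.
apply: (@continuous_comp_initial _ _ L set_val q).
have -> : set_val \o q = phi \o (@set_val K (phi @^-1` F)) by [].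
by move=> x; apply: continuous_comp; [exact: initial_continuous | exact: cphi].
Qed.

Lemma preimage_restriction_surj (z : set_type F) : exists x, q x = z.
Proof.
have [x pxz] := phi_surj (sval z).
have Fx : x \in phi @^-1` F by apply: mem_set; rewrite /= pxz; exact: set_valP.
by exists (exist _ x Fx); apply: val_inj.
Qed.

Let continuous_comp_q (f : set_type F -> R) : continuous f -> continuous (f \o q).
Proof. by move=> cf x; apply: continuous_comp (cf _); exact: preimage_restriction_continuous. Qed.

Definition averaged_extension (E' : (set_type (phi @^-1` F) -> R) -> (K -> R)) :
  (set_type F -> R) -> (L -> R) := fun f => P (E' (f \o q)).

Lemma averaged_extension_operator E' :
  extension_operator E' -> extension_operator (averaged_extension E').
Proof.
move=> [[E'_cont E'_lin [M E'_bound]] E'_ext]; split; first split.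
- by move=> f cf; apply/P_cont/E'_cont/continuous_comp_q.
- move=> a f g /continuous_comp_q cfq /continuous_comp_q cgq.
  rewrite /averaged_extension.
  have -> : (fun x => a * f x + g x) \o q = fun x => a * (f \o q) x + (g \o q) x.
    by [].
  by rewrite E'_lin // P_lin //; apply: E'_cont.
- exists M => f cf; apply: le_trans (P_contr (E'_cont _ (continuous_comp_q cf))) _.
  rewrite -(sup_norm_comp_surj f preimage_restriction_surj).
  exact: E'_bound (continuous_comp_q cf).
- move=> f cf z; apply: averaging_fiber_cst (E'_cont _ (continuous_comp_q cf)) _.
  move=> x pxz.
  have Fx : x \in phi @^-1` F by apply: mem_set; rewrite /= pxz; exact: set_valP.
  rewrite -[x]/(set_val (exist _ x Fx)) E'_ext; last exact: continuous_comp_q.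
  by congr f; apply: val_inj.
Qed.

Lemma averaged_regular_extension_operator E' :
  regular_extension_operator E' -> regular_extension_operator (averaged_extension E').
Proof.
move=> [E'_op E'_contr E'_1]; split; first exact: averaged_extension_operator.
- case: E'_op => -[E'_cont _ _] _ f cf.
  apply: le_trans (P_contr (E'_cont _ (continuous_comp_q cf))) _.
  rewrite -(sup_norm_comp_surj f preimage_restriction_surj).
  exact: E'_contr (continuous_comp_q cf).
- by rewrite /averaged_extension E'_1 averaging_cst.
Qed.

End RegularAveraging.

Unset Implicit Arguments.

Theorem proposition3p5 (R : realType) (K L : topologicalType) (phi : K -> L) :
  hausdorff_space K -> compact [set: K] ->
  hausdorff_space L -> compact [set: L] ->
  continuous phi -> (forall y : L, exists x : K, phi x = y) ->
  (exists P : (K -> R) -> (L -> R), regular_averaging_operator phi P) ->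
  (extension_property R K -> extension_property R L) /\
  (regular_extension_property R K -> regular_extension_property R L).
Proof.
move=> _ cK hL cL cphi phi_surj [P HP].
have closed_preimage (F : set L) : closed F -> closed (phi @^-1` F).
  by move=> clF; apply: preimage_closed => // x _; exact: cphi.
have preimage_neq0 (F : set L) : F !=set0 -> phi @^-1` F !=set0.
  by move=> [y Fy]; have [x pxy] := phi_surj y; exists x; rewrite /= pxy.
split=> EK F clF F0; have [E' HE'] := EK _ (closed_preimage F clF) (preimage_neq0 F F0).
- by exists (averaged_extension P E'); exact: averaged_extension_operator.
- by exists (averaged_extension P E'); exact: averaged_regular_extension_operator.
Qed.
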